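(* Let $f^+,f^-,f^\circ:[0,1]\to[0,1]$ satisfy $f^+(0)=f^-(0)=f^\circ(0)=0$, let $x$ be a feasible LP solution, and let $\alpha>0$. If $ALG(uvw)\le\alpha\, LP(uvw)$ for every $u,v,w\in V$, then for every step $t$ of the pivot rounding algorithm, $\mathbb{E}[ALG_t]\le\alpha\,\mathbb{E}[LP_t]$. Consequently the expected cost of the clustering returned by the algorithm is at most $\alpha$ times the LP objective value of $x$.
   Context: Setting: finite vertex set $V$; every pair of distinct vertices is a positive edge ($E^+$), a negative edge ($E^-$), or not an edge. The cost of a clustering (partition of $V$) is the number of positive edges with endpoints in different clusters plus the number of negative edges with endpoints in the same cluster. LP: variables $x_{uv}=x_{vu}\in[0,1]$, $x_{uu}=0$, $x_{uv}+x_{vw}\ge x_{uw}$ for all $u,v,w$; objective $\sum_{E^+}x_{uv}+\sum_{E^-}(1-x_{uv})$. For $u,w\in V$ let $p_{uw}=f^+(x_{uw})$, $f^-(x_{uw})$, or $f^\circ(x_{uw})$ according as $(u,w)$ is a positive edge, negative edge, or non-edge (so $p_{uu}=0$). Pivot rounding algorithm: $V_0=V$; while $V_t\ne\emptyset$: choose pivot $w_t\in V_t$ uniformly at random, put each $u\in V_t$ in $S_t$ independently with probability $1-p_{uw_t}$, set $V_{t+1}=V_t\setminus S_t$; output the $S_t$. $ALG_t$ is the number of positive edges $(u,v)$ with $u,v\in V_t$ and exactly one endpoint in $S_t$ plus the number of negative edges $(u,v)$ with $u,v\in V_t$ and both endpoints in $S_t$; $LP_t$ is the sum over positive edges $(u,v)$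 with $u,v\in V_t$ and at least one endpoint in $S_t$ of $x_{uv}$, plus the sum over such negative edges of $1-x_{uv}$ (with $LP_t=ALG_t=0$ after termination). For $u,v,w\in V$ define $e.cost_w(u,v)=p_{uw}(1-p_{vw})+(1-p_{uw})p_{vw}$ if $(u,v)\in E^+$, $(1-p_{uw})(1-p_{vw})$ if $(u,v)\in E^-$, $0$ otherwise; $e.lp_w(u,v)=(1-p_{uw}p_{vw})x_{uv}$ if $(u,v)\in E^+$, $(1-p_{uw}p_{vw})(1-x_{uv})$ if $(u,v)\in E^-$, $0$ otherwise. These are also defined for $u=v$: each pair $(u,u)$ is treated either as a non-edge or as a positive edge (positive self-loop; this is the convention used for complete graphs). Set $ALG(uvw)=e.cost_w(u,v)+e.cost_v(w,u)+e.cost_u(v,w)$ and $LP(uvw)=e.lp_w(u,v)+e.lp_v(w,u)+e.lp_u(v,w)$. *)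

From mathcomp Require Import all_boot all_order all_algebra.
Set Implicit Arguments. Unset Strict Implicit. Unset Printing Implicit Defensive.
Import Order.TTheory GRing.Theory Num.Theory.
Local Open Scope ring_scope.

Inductive ekind := EPos | ENeg | ENone.

Definition is_pos (k : ekind) : bool := if k is EPos then true else false.
Definition is_neg (k : ekind) : bool := if k is ENeg then true else false.

Section Defs.
Variables (R : realFieldType) (V : finType).
Variable (k : V -> V -> ekind).
Variables (fp fm fo : R -> R).
Variable (x : V -> V -> R).

Definition pair_sum (F : V -> V -> R) : R :=
  \sum_(u : V) \sum_(v : V | (enum_rank u < enum_rank v)%N) F u v.

Definition lp_feasible : Prop :=
  [/\ forall u v, x u v = x v u,
      forall u, x u u = 0,
      forall u v, 0 <= x u v <= 1
    & forall u v w, x u w <= x u v + x v w].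

Definition lp_obj : R :=
  pair_sum (fun u v => match k u v with
                       | EPos => x u v | ENeg => 1 - x u v | ENone => 0 end).

Definition pval (u w : V) : R :=
  match k u w with
  | EPos => fp (x u w) | ENeg => fm (x u w) | ENone => fo (x u w) end.

Definition ecost (w u v : V) : R :=
  match k u v with
  | EPos => pval u w * (1 - pval v w) + (1 - pval u w) * pval v w
  | ENeg => (1 - pval u w) * (1 - pval v w)
  | ENone => 0 end.

Definition elp (w u v : V) : R :=
  match k u v with
  | EPos => (1 - pval u w * pval v w) * x u v
  | ENeg => (1 - pval u w * pval v w) * (1 - x u v)
  | ENone => 0 end.

Definition ALG3 (u v w : V) : R := ecost w u v + ecost v w u + ecost u v w.
Definition LP3 (u v w : V) : R := elp w u v + elp v w u + elp u v w.

(* Probability that the step with remaining set W and pivot w selects exactly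
   S (for S a subset of W): each u in W joins S independently w.p. 1 - p_{uw}. *)
Definition selProb (W S : {set V}) (w : V) : R :=
  \prod_(u in W) (if u \in S then 1 - pval u w else pval u w).

(* Expectation over one round of the algorithm started from the remaining set
   W: uniform pivot w in W, then random S subset of W; 0 if W is empty. *)
Definition step_exp (W : {set V}) (g : {set V} -> R) : R :=
  if W == set0 then 0 else
  #|W|%:R^-1 * \sum_(w in W) \sum_(S in powerset W) selProb W S w * g S.

(* Et t W F = E[ F(V_t, S_t) ] for the run started at V_0 = W,
   where the contribution is 0 once the algorithm has terminated. *)
Fixpoint Et (t : nat) (W : {set V}) (F : {set V} -> {set V} -> R) : R :=
  match t with
  | 0 => step_exp W (fun S => F W S)
  | t'.+1 => step_exp W (fun S => Et t' (W :\: S) F)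
  end.

(* ALG_t and LP_t as functions of (V_t, S_t). *)
Definition ALG_step (W S : {set V}) : R :=
  pair_sum (fun u v =>
    if (u \in W) && (v \in W) then
      match k u v with
      | EPos => ((u \in S) != (v \in S))%:R
      | ENeg => ((u \in S) && (v \in S))%:R
      | ENone => 0 end
    else 0).

Definition LP_step (W S : {set V}) : R :=
  pair_sum (fun u v =>
    if [&& u \in W, v \in W & (u \in S) || (v \in S)] then
      match k u v with
      | EPos => x u v
      | ENeg => 1 - x u v
      | ENone => 0 end
    else 0).

Definition same_cluster (cl : seq {set V}) (u v : V) : bool :=
  has (fun S : {set V} => (u \in S) && (v \in S)) cl.

Definition clustering_cost (cl : seq {set V}) : R :=
  pair_sum (fun u v =>
    match k u v with
    | EPos => (~~ same_cluster cl u v)%:R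
    | ENeg => (same_cluster cl u v)%:R
    | ENone => 0 end).

(* Expected value of h(output clusters) for the run from W, with fuel n.
   Every positive-probability round removes at least the pivot (p_{ww} = 0),
   so fuel #|V| suffices for the run from V. *)
Fixpoint Eout (n : nat) (W : {set V}) (h : seq {set V} -> R) : R :=
  match n with
  | 0 => h [::]
  | n'.+1 =>
      if W == set0 then h [::]
      else step_exp W (fun S => Eout n' (W :\: S) (fun rest => h (S :: rest)))
  end.

Definition expected_output_cost : R :=
  Eout #|V| [set: V] clustering_cost.

End Defs.

From mathcomp Require Import all_boot all_order all_algebra.
From mathcomp Require Import ring lra.
Set Implicit Arguments. Unset Strict Implicit. Unset Printing Implicit Defensive.
Import Order.TTheory GRing.Theory Num.Theory.
Local Open Scope ring_scope.

(* Conditioned on the pivot w, the vertices join S_t independently, so a pair {u,v}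
   inside V_t contributes e.cost_w(u,v) to E[ALG_t] and e.lp_w(u,v) to E[LP_t].
   Averaging over a uniform pivot in V_t and counting every pair twice turns both
   expectations into sums over all triples of V_t.  There cyclic rotation gives
   3 sum e.cost = sum ALG(uvw) <= alpha sum LP(uvw) = 3 alpha sum e.lp, while the
   diagonal terms u = v only lower the cost side and vanish on the LP side
   (x_uu = 0).  Conditioning on the history gives the bound for every t.
   For the output, the cost already paid on pairs that have left the remaining set,
   plus alpha times the LP weight of the pairs still inside it, decreases in
   expectation: a round adds ALG_t to the first part and removes LP_t from the
   second.  It starts at alpha times the LP objective and ends at the cost of the
   clustering. *)

Section SubsetSums.
Variables (R : comPzRingType) (V : finType).
Implicit Types (W S : {set V}) (G : V -> bool -> R).

Lemma sum_powerset_prod W G :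
  \sum_(S in powerset W) \prod_(z in W) G z (z \in S)
  = \prod_(z in W) (G z true + G z false).
Proof.
pose F z b := if z \in W then G z b else (~~ b)%:R.
have -> : \prod_(z in W) (G z true + G z false) = \prod_z (F z true + F z false).
  rewrite [RHS](bigID [in W]) /= [X in _ * X]big1 ?mulr1 => [|z /negbTE zW]; last first.
    by rewrite /F zW add0r.
  by apply: eq_bigr => z zW; rewrite /F zW.
rewrite bigA_distr big_mkcond /=; apply: eq_bigr => S _.
have FS z : (if z \in S then F z true else F z false) = F z (z \in S).
  by case: (z \in S).
under [in RHS]eq_bigr do rewrite FS.
rewrite [RHS](bigID [in W]) /= powersetE.
under [in RHS]eq_bigr => z zW do rewrite /F zW.
case: (boolP (S \subset W)) => [/subsetP SW | /subsetPn[z zS zW]].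
  rewrite [X in _ = _ * X]big1 ?mulr1 // => z /negbTE zW.
  by rewrite /F zW; case: (boolP (z \in S)) => // /SW; rewrite zW.
by rewrite [X in _ = _ * X](bigD1 z) //= /F (negbTE zW) zS mul0r mulr0.
Qed.

Lemma sum_powerset_prod_pair W G (h : bool -> bool -> R) u v :
  u != v -> u \in W -> v \in W ->
  (forall z, z \in W -> G z true + G z false = 1) ->
  \sum_(S in powerset W) (\prod_(z in W) G z (z \in S)) * h (u \in S) (v \in S)
  = \sum_(a : bool) \sum_(b : bool) G u a * G v b * h a b.
Proof.
move=> uv uW vW G1.
pose Gab a b z c := G z c * (if z == u then (c == a)%:R else 1)
                          * (if z == v then (c == b)%:R else 1).
have vu : (v == u) = false by rewrite eq_sym (negbTE uv).
have prod_uv (H : V -> R) :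
    \prod_(z in W) H z = H u * H v * \prod_(z in W | (z != u) && (z != v)) H z.
  rewrite (bigD1 u) //= (bigD1 v) /=; last by rewrite vW eq_sym.
  by rewrite mulrA; congr (_ * _); apply: eq_bigl => z; rewrite andbA.
have Gab_out a b z c : z != u -> z != v -> Gab a b z c = G z c.
  by rewrite /Gab => /negbTE-> /negbTE->; rewrite !mulr1.
transitivity (\sum_(S in powerset W) \sum_(a : bool) \sum_(b : bool)
    h a b * \prod_(z in W) Gab a b z (z \in S)).
  apply: eq_bigr => S _; rewrite prod_uv.
  under [in RHS]eq_bigr do under eq_bigr do rewrite prod_uv.
  under [in RHS]eq_bigr do under eq_bigr do
    under [in X in _ * X]eq_bigr => z /andP[_ /andP[zu zv]] do rewrite Gab_out //.
  rewrite !big_bool /Gab eqxx vu (negbTE uv) eqxx.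
  by case: (u \in S); case: (v \in S); rewrite /=; ring.
rewrite exchange_big; apply: eq_bigr => a _; rewrite exchange_big; apply: eq_bigr => b _ /=.
rewrite -big_distrr sum_powerset_prod prod_uv big1 => [|z /andP[zW /andP[zu zv]]]; last first.
  by rewrite !Gab_out // G1.
rewrite /Gab eqxx vu (negbTE uv) eqxx.
by case: a; case: b; rewrite /=; ring.
Qed.
End SubsetSums.

Section PairSums.
Variables (R : realFieldType) (V : finType).
Implicit Types (W : {set V}) (F G : V -> V -> R).

Definition pair_sum_in W F : R :=
  pair_sum (fun u v => if (u \in W) && (v \in W) then F u v else 0).

Definition sum3 W (g : V -> V -> V -> R) : R :=
  \sum_(a in W) \sum_(b in W) \sum_(c in W) g a b c.

Lemma eq_pair_sum F G : (forall u v, u != v -> F u v = G u v) -> pair_sum F = pair_sum G.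
Proof.
move=> FG; apply: eq_bigr => u _; apply: eq_bigr => v uv; apply: FG.
by apply: contraTneq uv => ->; rewrite ltnn.
Qed.

Lemma pair_sum_eq0 F : (forall u v, u != v -> F u v = 0) -> pair_sum F = 0.
Proof. by move=> F0; rewrite (eq_pair_sum F0) /pair_sum big1 // => u _; rewrite big1. Qed.

Lemma pair_sum_in_set0 F : pair_sum_in set0 F = 0.
Proof. by apply: pair_sum_eq0 => u v _; rewrite inE. Qed.

Lemma pair_sum_in_setT F : pair_sum_in setT F = pair_sum F.
Proof. by apply: eq_pair_sum => u v _; rewrite !inE. Qed.

Lemma pair_sumD F G : pair_sum (fun u v => F u v + G u v) = pair_sum F + pair_sum G.
Proof. by rewrite /pair_sum -big_split; apply: eq_bigr => u _; rewrite -big_split. Qed.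

Lemma sum_pair_sum (I : finType) (A : {pred I}) (c : I -> R) (F : I -> V -> V -> R) :
  \sum_(i in A) c i * pair_sum (F i) = pair_sum (fun u v => \sum_(i in A) c i * F i u v).
Proof.
rewrite /pair_sum; under eq_bigr do rewrite big_distrr.
rewrite exchange_big; apply: eq_bigr => u _.
by under eq_bigr do rewrite big_distrr; rewrite exchange_big.
Qed.

Lemma sum_sym_pair_sum F : (forall u v, F u v = F v u) ->
  \sum_u \sum_v F u v = pair_sum F + pair_sum F + \sum_u F u u.
Proof.
move=> Fsym; pose r := @enum_rank V.
have PE : pair_sum F = \sum_u \sum_v if (r u < r v)%N then F u v else 0.
  by apply: eq_bigr => u _; rewrite big_mkcond.
have DE : \sum_u F u u = \sum_u \sum_v if v == u then F u v else 0.
  by apply: eq_bigr => u _; rewrite -big_mkcond big_pred1_eq.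
rewrite {1}PE [X in _ + X + _]PE [X in _ + X + _]exchange_big DE.
rewrite -!big_split; apply: eq_bigr => u _; rewrite -!big_split; apply: eq_bigr => v _ /=.
rewrite [F v u]Fsym; case: ltngtP => uv.
- by rewrite ifF ?addr0 //; apply: contraTF uv => /eqP->; rewrite ltnn.
- by rewrite ifF ?addr0 ?add0r //; apply: contraTF uv => /eqP->; rewrite ltnn.
- by rewrite (enum_rank_inj (ord_inj uv)) eqxx !add0r.
Qed.

Lemma sum_sym_pair_sum_in W F : (forall u v, F u v = F v u) ->
  \sum_(u in W) \sum_(v in W) F u v
  = pair_sum_in W F + pair_sum_in W F + \sum_(u in W) F u u.
Proof.
move=> Fsym; pose G u v := if (u \in W) && (v \in W) then F u v else 0.
have -> : \sum_(u in W) F u u = \sum_u G u u.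
  by rewrite big_mkcond; apply: eq_bigr => u _; rewrite /G andbb.
rewrite -sum_sym_pair_sum => [|u v]; last by rewrite /G Fsym andbC.
rewrite big_mkcond; apply: eq_bigr => u _; rewrite big_mkcond /G.
by case: (u \in W) => //=; rewrite big1.
Qed.

Lemma sum3_rot W g : sum3 W (fun a b c => g b c a) = sum3 W g.
Proof.
by rewrite /sum3 exchange_big; under eq_bigr do rewrite exchange_big.
Qed.

Lemma sum3D W g1 g2 : sum3 W (fun a b c => g1 a b c + g2 a b c) = sum3 W g1 + sum3 W g2.
Proof.
rewrite /sum3 -big_split; apply: eq_bigr => a _; rewrite -big_split.
by apply: eq_bigr => b _; rewrite -big_split.
Qed.

Lemma ler_sum3 W g1 g2 : (forall a b c, g1 a b c <= g2 a b c) -> sum3 W g1 <= sum3 W g2.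
Proof. by move=> le12; do 3 apply: ler_sum => ? _; apply: le12. Qed.

Lemma sum3Z W c g : sum3 W (fun a b d => c * g a b d) = c * sum3 W g.
Proof. by rewrite /sum3 mulr_sumr; do 2 (apply: eq_bigr => ? _; rewrite mulr_sumr). Qed.

End PairSums.

Section RoundingProbabilities.
Variables (R : realFieldType) (V : finType) (k : V -> V -> ekind).
Variables (fp fm fo : R -> R) (x : V -> V -> R).
Hypothesis x_feasible : lp_feasible x.

Lemma pval_range :
  (forall y, 0 <= y <= 1 -> 0 <= fp y <= 1) ->
  (forall y, 0 <= y <= 1 -> 0 <= fm y <= 1) ->
  (forall y, 0 <= y <= 1 -> 0 <= fo y <= 1) ->
  forall u w, 0 <= pval k fp fm fo x u w <= 1.
Proof.
case: x_feasible => _ _ x_range _ fp01 fm01 fo01 u w.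
by rewrite /pval; case: (k u w); [apply: fp01 | apply: fm01 | apply: fo01].
Qed.

Lemma pval_diag : fp 0 = 0 -> fm 0 = 0 -> fo 0 = 0 -> forall w, pval k fp fm fo x w w = 0.
Proof.
by case: x_feasible => _ x_diag _ _ fp0 fm0 fo0 w; rewrite /pval x_diag; case: (k w w).
Qed.

End RoundingProbabilities.

Section PivotRounding.
Variables (R : realFieldType) (V : finType).
Variables (k : V -> V -> ekind) (fp fm fo : R -> R) (x : V -> V -> R).

Local Notation p := (pval k fp fm fo x).
Local Notation sel := (selProb k fp fm fo x).
Local Notation stepE := (step_exp k fp fm fo x).
Local Notation ec := (ecost k fp fm fo x).
Local Notation el := (elp k fp fm fo x).

Implicit Types (W S : {set V}) (g : {set V} -> R).

Hypothesis p_range : forall u w, 0 <= p u w <= 1.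
Hypothesis p_pivot : forall w, p w w = 0.

Definition member_prob (w z : V) (b : bool) : R := if b then 1 - p z w else p z w.

Lemma member_prob_ge0 w z b : 0 <= member_prob w z b.
Proof. by have /andP[? ?] := p_range z w; rewrite /member_prob; case: b; lra. Qed.

Lemma selProb_ge0 W S w : 0 <= sel W S w.
Proof. by apply: prodr_ge0 => z _; apply: member_prob_ge0. Qed.

Lemma selProb_pivot W S w : w \in W -> w \notin S -> sel W S w = 0.
Proof. by move=> wW wS; rewrite /selProb (bigD1 w) //= (negbTE wS) p_pivot mul0r. Qed.

Lemma sum_selProb W w : \sum_(S in powerset W) sel W S w = 1.
Proof.
by rewrite (sum_powerset_prod W (member_prob w)) big1 // => z _; rewrite /member_prob subrK.
Qed.

Lemma sum_selProb_pair W w u v (h : bool -> bool -> R) :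
  u != v -> u \in W -> v \in W ->
  \sum_(S in powerset W) sel W S w * h (u \in S) (v \in S)
  = \sum_(a : bool) \sum_(b : bool) member_prob w u a * member_prob w v b * h a b.
Proof.
move=> uv uW vW; apply: (sum_powerset_prod_pair (G := member_prob w)) => // z _.
by rewrite /member_prob subrK.
Qed.

Lemma step_exp_le W g1 g2 :
  (forall w S, w \in W -> S \subset W -> w \in S -> g1 S <= g2 S) ->
  stepE W g1 <= stepE W g2.
Proof.
move=> le12; rewrite /step_exp; case: eqP => // _.
apply: ler_wpM2l; first by rewrite invr_ge0 ler0n.
apply: ler_sum => w wW; apply: ler_sum => S; rewrite powersetE => SW.
case: (boolP (w \in S)) => wS.
  by apply: ler_wpM2l; [exact: selProb_ge0 | exact: (le12 w S wW SW wS)].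
by rewrite selProb_pivot ?mul0r.
Qed.

Lemma eq_step_exp W g1 g2 : g1 =1 g2 -> stepE W g1 = stepE W g2.
Proof. by move=> g12; rewrite /step_exp; under eq_bigr do under eq_bigr do rewrite g12. Qed.

Lemma step_expZ W c g : stepE W (fun S => c * g S) = c * stepE W g.
Proof.
rewrite /step_exp; case: eqP => _; first by rewrite mulr0.
rewrite [RHS]mulrCA [c * _]mulr_sumr; congr (_ * _); apply: eq_bigr => w _.
by rewrite mulr_sumr; apply: eq_bigr => S _; rewrite mulrCA.
Qed.

Lemma step_expD W g1 g2 :
  stepE W (fun S => g1 S + g2 S) = stepE W g1 + stepE W g2.
Proof.
rewrite /step_exp; case: eqP => _; first by rewrite addr0.
rewrite -mulrDr -big_split; congr (_ * _); apply: eq_bigr => w _.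
by rewrite -big_split; apply: eq_bigr => S _; rewrite mulrDr.
Qed.

Lemma step_exp_cst W c : W != set0 -> stepE W (fun _ => c) = c.
Proof.
move=> W0; rewrite /step_exp (negbTE W0).
under eq_bigr do rewrite -big_distrl /= sum_selProb mul1r.
by rewrite sumr_const -[c *+ _]mulr_natl mulrA mulVf ?mul1r // pnatr_eq0 -lt0n card_gt0.
Qed.

Lemma step_expB W g1 g2 :
  stepE W (fun S => g1 S - g2 S) = stepE W g1 - stepE W g2.
Proof.
rewrite /step_exp; case: eqP => _; first by rewrite subr0.
rewrite -mulrBr -sumrB; congr (_ * _); apply: eq_bigr => w _.
by rewrite -sumrB; apply: eq_bigr => S _; rewrite mulrBr.
Qed.

Lemma sum_selProb_ALG_step W w :
  \sum_(S in powerset W) sel W S w * ALG_step R k W S = pair_sum_in W (ec w).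
Proof.
rewrite /ALG_step sum_pair_sum; apply: eq_pair_sum => u v uv.
case: (boolP ((u \in W) && (v \in W))) => [/andP[uW vW] | /negbTE uvW]; last first.
  by rewrite big1 // => S _; rewrite mulr0.
rewrite /ecost; case: (k u v).
- by rewrite (sum_selProb_pair _ (fun a b => (a != b)%:R)) // !big_bool /member_prob /=; ring.
- by rewrite (sum_selProb_pair _ (fun a b => (a && b)%:R)) // !big_bool /member_prob /=; ring.
- by rewrite big1 // => S _; rewrite mulr0.
Qed.

Lemma sum_selProb_LP_step W w :
  \sum_(S in powerset W) sel W S w * LP_step k x W S = pair_sum_in W (el w).
Proof.
rewrite /LP_step sum_pair_sum; apply: eq_pair_sum => u v uv.
case: (boolP ((u \in W) && (v \in W))) => [/andP[uW vW] | /negbTE uvW]; last first.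
  by rewrite big1 // => S _; case: (u \in W) uvW; case: (v \in W) => //= _; rewrite mulr0.
rewrite uW vW /elp /=; case: (k u v).
- by rewrite (sum_selProb_pair _ (fun a b => if a || b then x u v else 0)) //
     !big_bool /member_prob /=; ring.
- by rewrite (sum_selProb_pair _ (fun a b => if a || b then 1 - x u v else 0)) //
     !big_bool /member_prob /=; ring.
- by rewrite big1 // => S _; case: ifP; rewrite mulr0.
Qed.

Hypothesis k_sym : forall u v, k u v = k v u.
Hypothesis k_diag : forall u, k u u = EPos \/ k u u = ENone.
Hypothesis x_feasible : lp_feasible x.

Lemma ecost_sym w u v : ec w u v = ec w v u.
Proof. by rewrite /ecost k_sym; case: (k v u); ring. Qed.

Lemma elp_sym w u v : el w u v = el w v u.
Proof. by case: x_feasible => x_sym _ _ _; rewrite /elp k_sym x_sym; case: (k v u); ring. Qed.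

Lemma ecost_diag_ge0 w u : 0 <= ec w u u.
Proof.
have /andP[p0 p1] := p_range u w.
by rewrite /ecost; case: (k_diag u) => ->; rewrite // addr_ge0 ?mulr_ge0 ?subr_ge0.
Qed.

Lemma elp_diag w u : el w u u = 0.
Proof.
by case: x_feasible => _ x_diag _ _; rewrite /elp x_diag; case: (k_diag u) => ->; rewrite ?mulr0.
Qed.

Lemma sum_pivot_ALG_le W : (\sum_(w in W) pair_sum_in W (ec w)) *+ 2 <= sum3 W ec.
Proof.
rewrite mulr2n -big_split /sum3 ler_sum // => w _ /=.
rewrite sum_sym_pair_sum_in; last exact: ecost_sym.
by rewrite lerDl sumr_ge0 // => u _; apply: ecost_diag_ge0.
Qed.

Lemma sum_pivot_LP W : (\sum_(w in W) pair_sum_in W (el w)) *+ 2 = sum3 W el.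
Proof.
rewrite mulr2n -big_split /sum3; apply: eq_bigr => w _ /=.
rewrite sum_sym_pair_sum_in; last exact: elp_sym.
by rewrite big1 ?addr0 // => u _; apply: elp_diag.
Qed.

Variable alpha : R.
Hypothesis triangle_bound :
  forall u v w, ALG3 k fp fm fo x u v w <= alpha * LP3 k fp fm fo x u v w.

Lemma sum3_ecost_le W : sum3 W ec <= alpha * sum3 W el.
Proof.
have rot3 (g : V -> V -> V -> R) :
    sum3 W (fun u v w => g w u v + g v w u + g u v w) = sum3 W g *+ 3.
  rewrite !sum3D (sum3_rot W g) -(sum3_rot W (fun a b c => g c a b)).
  by rewrite !mulrSr mulr0n add0r.
have := ler_sum3 W triangle_bound; rewrite sum3Z /ALG3 /LP3 !rot3.
by rewrite mulrnAr ler_pMn2r.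
Qed.

Lemma step_exp_ALG_le W : stepE W (ALG_step R k W) <= alpha * stepE W (LP_step k x W).
Proof.
rewrite /step_exp; case: eqP => _; first by rewrite mulr0.
rewrite mulrCA ler_wpM2l ?invr_ge0 ?ler0n //.
under eq_bigr do rewrite sum_selProb_ALG_step.
under [in X in _ <= X]eq_bigr do rewrite sum_selProb_LP_step.
rewrite -(@ler_pMn2r _ 2 isT) -mulrnAr sum_pivot_LP.
exact: le_trans (sum_pivot_ALG_le W) (sum3_ecost_le W).
Qed.

Lemma Et_ALG_le t W :
  Et k fp fm fo x t W (ALG_step R k) <= alpha * Et k fp fm fo x t W (LP_step k x).
Proof.
elim: t W => [|t IH] W /=; first exact: step_exp_ALG_le.
by rewrite -step_expZ; apply: step_exp_le => w S _ _ _; apply: IH.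
Qed.

Definition cost_term (cl : seq {set V}) u v : R :=
  match k u v with
  | EPos => (~~ same_cluster cl u v)%:R
  | ENeg => (same_cluster cl u v)%:R
  | ENone => 0 end.

Definition lp_term u v : R :=
  match k u v with EPos => x u v | ENeg => 1 - x u v | ENone => 0 end.

Definition settled_cost W cl : R :=
  pair_sum (fun u v => if (u \in W) && (v \in W) then 0 else cost_term cl u v).

Lemma settled_cost_set0 cl : settled_cost set0 cl = clustering_cost R k cl.
Proof. by apply: eq_pair_sum => u v _; rewrite inE. Qed.

Lemma settled_cost_setT cl : settled_cost setT cl = 0.
Proof. by apply: pair_sum_eq0 => u v _; rewrite !inE. Qed.

Definition unclustered cl W := forall u v, u \in W -> same_cluster cl u v = false.

Lemma same_cluster_rcons cl S u v :
  same_cluster (rcons cl S) u v = same_cluster cl u v || (u \in S) && (v \in S).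
Proof. by rewrite /same_cluster -cats1 has_cat /= orbF. Qed.

Lemma unclustered_rcons cl W S : unclustered cl W -> unclustered (rcons cl S) (W :\: S).
Proof.
by move=> clW u v /setDP[uW uS]; rewrite same_cluster_rcons clW // (negbTE uS).
Qed.

Lemma settled_cost_rcons cl W S : S \subset W -> unclustered cl W ->
  settled_cost (W :\: S) (rcons cl S) = settled_cost W cl + ALG_step R k W S.
Proof.
move=> /subsetP SW clW; rewrite /settled_cost /ALG_step -pair_sumD.
apply: eq_pair_sum => u v _; rewrite !inE /cost_term same_cluster_rcons.
move: (SW u) (SW v) (clW u v).
case: (u \in S); case: (v \in S); case: (u \in W); case: (v \in W) => SWu SWv clWu;
  try rewrite (clWu isT); try (by move: (SWu isT)); try (by move: (SWv isT));
  by case: (k u v); rewrite /= ?add0r ?addr0 ?orbF.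
Qed.

Lemma pair_sum_in_lp_term_setD W S : S \subset W ->
  pair_sum_in W lp_term = pair_sum_in (W :\: S) lp_term + LP_step k x W S.
Proof.
move=> /subsetP SW; rewrite /pair_sum_in /LP_step -pair_sumD.
apply: eq_pair_sum => u v _; rewrite !inE /lp_term.
move: (SW u) (SW v).
case: (u \in S); case: (v \in S); case: (u \in W); case: (v \in W) => SWu SWv;
  try (by move: (SWu isT)); try (by move: (SWv isT));
  by rewrite /= ?add0r ?addr0.
Qed.

Lemma eq_Eout n W h1 h2 : h1 =1 h2 ->
  Eout k fp fm fo x n W h1 = Eout k fp fm fo x n W h2.
Proof.
elim: n W h1 h2 => [|n IH] W h1 h2 h12 /=; first exact: h12.
case: ifP => _; first exact: h12.
by apply: eq_step_exp => S; apply: IH => rest; apply: h12.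
Qed.

Lemma Eout_cost_le n W cl : (#|W| <= n)%N -> unclustered cl W ->
  Eout k fp fm fo x n W (fun rest => clustering_cost R k (cl ++ rest))
  <= settled_cost W cl + alpha * pair_sum_in W lp_term.
Proof.
have finished W' cl' : W' = set0 -> clustering_cost R k (cl' ++ [::])
    = settled_cost W' cl' + alpha * pair_sum_in W' lp_term.
  by move=> ->; rewrite cats0 settled_cost_set0 pair_sum_in_set0 mulr0 addr0.
elim: n W cl => [|n IH] W cl Wn clW /=.
  by rewrite (finished W) //; apply/eqP; rewrite -cards_eq0 -leqn0.
case: eqP => [W0|/eqP W0]; first by rewrite (finished W).
pose bound S := settled_cost W cl + alpha * pair_sum_in W lp_term
                + (ALG_step R k W S - alpha * LP_step k x W S).
apply: (@le_trans _ _ (stepE W bound)).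
  apply: step_exp_le => w S wW SW wS.
  rewrite (eq_Eout _ _ (h2 := fun rest => clustering_cost R k (rcons cl S ++ rest)));
    last by move=> rest; rewrite cat_rcons.
  have WSn : (#|W :\: S| <= n)%N.
    rewrite -ltnS (leq_trans _ Wn) // proper_card //.
    by apply/properP; split; [exact: subsetDl | exists w; rewrite ?inE ?wS].
  apply: le_trans (IH _ _ WSn (unclustered_rcons (S := S) clW)) _.
  rewrite settled_cost_rcons // /bound (pair_sum_in_lp_term_setD SW); lra.
rewrite step_expD step_exp_cst // step_expB step_expZ.
by have := step_exp_ALG_le W; lra.
Qed.

End PivotRounding.

Theorem lemma1 (R : realFieldType) (V : finType) (k : V -> V -> ekind)
  (fp fm fo : R -> R) (x : V -> V -> R) (alpha : R) :
  (forall u v, k u v = k v u) ->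
  (forall u, k u u = EPos \/ k u u = ENone) ->
  (forall y, 0 <= y <= 1 -> 0 <= fp y <= 1) ->
  (forall y, 0 <= y <= 1 -> 0 <= fm y <= 1) ->
  (forall y, 0 <= y <= 1 -> 0 <= fo y <= 1) ->
  fp 0 = 0 -> fm 0 = 0 -> fo 0 = 0 ->
  lp_feasible x ->
  0 < alpha ->
  (forall u v w, ALG3 k fp fm fo x u v w <= alpha * LP3 k fp fm fo x u v w) ->
  (forall t : nat,
      Et k fp fm fo x t [set: V] (@ALG_step R V k)
      <= alpha * Et k fp fm fo x t [set: V] (@LP_step R V k x))
  /\ expected_output_cost k fp fm fo x <= alpha * lp_obj k x.
Proof.
(* No sign condition on alpha is needed. *)
move=> k_sym k_diag fp01 fm01 fo01 fp0 fm0 fo0 x_feasible _ triangle_bound.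
have p_range := pval_range k x_feasible fp01 fm01 fo01.
have p_pivot := pval_diag k x_feasible fp0 fm0 fo0.
split=> [t|]; first exact: Et_ALG_le.
have := Eout_cost_le p_range p_pivot k_sym k_diag x_feasible triangle_bound
  (leqnn #|[set: V]|) (cl := [::]) (fun _ _ _ => erefl).
by rewrite settled_cost_setT add0r pair_sum_in_setT cardsT.
Qed.
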